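(* Let $D=(E,\mathcal{F})$ be a delta-matroid. Then ${}^{\partial}w_{D}(z)$ is a constant (i.e. equals some integer $k$) if and only if $|\mathcal{F}|=1$.
   Context: A delta-matroid is a set system $(E,\mathcal{F})$, $\mathcal{F}\ne\emptyset$ a family of subsets of finite $E$, satisfying: for all $X,Y\in\mathcal{F}$ and $u\in X\Delta Y$ there is $v\in X\Delta Y$ (possibly $v=u$) with $X\Delta\{u,v\}\in\mathcal{F}$. Twist: $D*A=(E,\{A\Delta X:X\in\mathcal{F}\})$. Width $w(D)$ = maximum minus minimum cardinality of feasible sets; twist polynomial ${}^{\partial}w_{D}(z)=\sum_{A\subseteq E}z^{w(D*A)}$. *)

From mathcomp Require Import all_boot all_order all_algebra.
Set Implicit Arguments. Unset Strict Implicit. Unset Printing Implicit Defensive.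
Import GRing.Theory.
Local Open Scope ring_scope.

Definition symdiff (E : finType) (X Y : {set E}) : {set E} := (X :\: Y) :|: (Y :\: X).

Definition is_delta_matroid (E : finType) (F : {set {set E}}) : Prop :=
  F != set0 /\
  forall X Y, X \in F -> Y \in F -> forall u, u \in symdiff X Y ->
    exists2 v, v \in symdiff X Y & symdiff X [set u; v] \in F.

Definition twist (E : finType) (F : {set {set E}}) (A : {set E}) : {set {set E}} :=
  [set symdiff A X | X in F].

(* Maximum and minimum cardinalities of feasible sets (for nonempty F).
   The minimum is taken with neutral #|E|, an upper bound of all #|X|. *)
Definition maxcard (E : finType) (F : {set {set E}}) : nat := (\max_(X in F) #|X|)%N.
Definition mincard (E : finType) (F : {set {set E}}) : nat :=
  (\big[minn/#|E|]_(X in F) #|X|)%N.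

Definition width (E : finType) (F : {set {set E}}) : nat := (maxcard F - mincard F)%N.

Definition twist_poly (E : finType) (F : {set {set E}}) : {poly int} :=
  \sum_(A : {set E}) 'X^(width (twist F A)).

From HB Require Import structures.
From mathcomp Require Import all_boot all_order all_algebra.
Import GRing.Theory Num.Theory.
Local Open Scope ring_scope.

(* The twist polynomial of a nonempty set system is constant exactly when the
   system has a single feasible set.

   - If F = [set S], every twist F * A is the singleton [set A Δ S], whose
     width is 0, so the twist polynomial is the constant #|{set E}| = 2^|E|.
   - If X != Y are both feasible, the twist F * X contains X Δ X = ∅ and the
     nonempty set X Δ Y, so its width d is positive.  The coefficient of z^d
     in the twist polynomial counts the A with w(F * A) = d; it is nonzero
     (A = X is counted), so the polynomial is not constant. *)

Lemma symdiff_self {E : finType} (X : {set E}) : symdiff X X = set0.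
Proof. by rewrite /symdiff setDv setU0. Qed.

Lemma symdiff_eq0 {E : finType} (X Y : {set E}) :
  (symdiff X Y == set0) = (X == Y).
Proof. by rewrite /symdiff setU_eq0 !setD_eq0 eqEsubset. Qed.

(* minn is associative and commutative, which lets us pull one term out of the
   iterated minimum defining mincard. *)
HB.instance Definition _ := SemiGroup.isComLaw.Build nat minn minnA minnC.

Lemma mincard_le {E : finType} {F : {set {set E}}} {X : {set E}} :
  X \in F -> (mincard F <= #|X|)%N.
Proof.
by move=> XF; rewrite /mincard (big_rem_AC _ _ _ _ (mem_index_enum X)) XF geq_minl.
Qed.

(* Conversely, a common lower bound of the feasible cardinalities (at most
   #|E|, the neutral value of the minimum) bounds mincard from below. *)
Lemma mincard_ge {E : finType} (F : {set {set E}}) (n : nat) :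
  (n <= #|E|)%N -> (forall X, X \in F -> n <= #|X|)%N -> (n <= mincard F)%N.
Proof.
move=> nE Fn; apply: (big_ind (fun m => n <= m)%N) => // m m' nm nm'.
by rewrite leq_min nm nm'.
Qed.

Lemma maxcard_ge {E : finType} {F : {set {set E}}} {X : {set E}} :
  X \in F -> (#|X| <= maxcard F)%N.
Proof. by move=> XF; rewrite /maxcard (bigD1 X) //= leq_maxl. Qed.

Lemma width_set1 {E : finType} (S : {set E}) : width [set S] = 0%N.
Proof.
apply/eqP; rewrite subn_eq0 /maxcard big_set1.
by apply: mincard_ge => [|X /set1P ->]; rewrite ?max_card.
Qed.

Lemma width_gt0 {E : finType} (F : {set {set E}}) (Z : {set E}) :
  set0 \in F -> Z \in F -> Z != set0 -> (0 < width F)%N.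
Proof.
move=> F0 ZF Zn0; rewrite /width.
have -> : mincard F = 0%N by apply/eqP; rewrite -leqn0 -(cards0 E) mincard_le.
by rewrite subn0 (leq_trans _ (maxcard_ge ZF)) // lt0n cards_eq0.
Qed.

Lemma width_twist_gt0 {E : finType} {F : {set {set E}}} {X Y : {set E}} :
  X \in F -> Y \in F -> X != Y -> (0 < width (twist F X))%N.
Proof.
move=> XF YF XY; apply: (@width_gt0 _ _ (symdiff X Y)).
- by rewrite -(symdiff_self X); apply: imset_f.
- exact: imset_f.
- by rewrite symdiff_eq0.
Qed.

Lemma coef_twist_poly {E : finType} (F : {set {set E}}) (d : nat) :
  (twist_poly F)`_d = #|[set A : {set E} | width (twist F A) == d]|%:R.
Proof.
rewrite /twist_poly coef_sum -sum1_card natr_sum [RHS]big_mkcond /=.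
by apply: eq_bigr => A _; rewrite coefXn inE eq_sym; case: (_ == _).
Qed.

Lemma twist_poly_set1 {E : finType} (S : {set E}) :
  twist_poly [set S] = #|{set E}|%:R.
Proof.
rewrite /twist_poly (eq_bigr (fun _ => 1)) ?sumr_const //.
by move=> A _; rewrite /twist imset_set1 width_set1 expr0.
Qed.

Lemma twist_poly_nonconstant {E : finType} {F : {set {set E}}} {X Y : {set E}} :
  X \in F -> Y \in F -> X != Y -> forall k : int, twist_poly F != k%:P.
Proof.
move=> XF YF XY k; set d := width (twist F X).
apply/eqP => /(congr1 (fun p : {poly int} => p`_d)).
rewrite coef_twist_poly coefC gtn_eqF ?(width_twist_gt0 XF YF XY) //.
by move/eqP; rewrite pnatr_eq0 cards_eq0 => /eqP/setP/(_ X); rewrite !inE eqxx.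
Qed.

Theorem mainTheorem6 (E : finType) (F : {set {set E}}) :
  is_delta_matroid F ->
  ((exists k : int, twist_poly F = k%:P) <-> #|F| = 1%N).
Proof.
move=> [F_neq0 _]; split.
- case=> k twistF; apply/eqP; rewrite eqn_leq card_gt0 F_neq0 andbT leqNgt.
  apply/card_gt1P => -[X [Y [XF YF XY]]].
  by move: (twist_poly_nonconstant XF YF XY k); rewrite twistF eqxx.
- move=> /eqP/cards1P [S ->]; exists #|{set E}|%:Z.
  by rewrite twist_poly_set1 -polyC_natr natz.
Qed.
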